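(* Let $X$ be a nonsingular projective toric variety and let $\beta\in H_2(X,\mathbb{Z})$ be nonzero. If the toric divisors $D$ of $X$ with $\int_\beta D<0$ have nonempty common intersection, then $\int_\beta A>0$ for every ample divisor $A$ on $X$.
   Context: Toric divisors are the torus-invariant prime divisors of $X$, in bijection with the rays of the fan of $X$. The common intersection of an empty family of divisors is $X$ itself. *)

(* Combinatorial model of a nonsingular projective toric
   variety X via its (smooth, complete, polytopal) fan in N = Z^n. *)
From HB Require Import structures.
From mathcomp Require Import all_boot all_order all_algebra.
Set Implicit Arguments. Unset Strict Implicit. Unset Printing Implicit Defensive.
Import Order.TTheory GRing.Theory Num.Theory.
Local Open Scope ring_scope.

(* Rays of the fan are indexed by 'I_r, with primitive generators u i in N = Z^n.
   The fan is given by its set S of maximal cones, each a set of ray indices. *)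

Definition dotz (n : nat) (m v : 'rV[int]_n) : int := \sum_(k < n) m 0 k * v 0 k.

Definition ratv (n : nat) (v : 'rV[int]_n) : 'rV[rat]_n := map_mx (fun z : int => z%:~R) v.

Definition in_cone (n r : nat) (u : 'I_r -> 'rV[int]_n) (s : {set 'I_r}) (x : 'rV[rat]_n) : Prop :=
  exists l : 'I_r -> rat, (forall i, 0 <= l i) /\ (forall i, i \notin s -> l i = 0) /\
    x = \sum_(i < r) l i *: ratv (u i).

Definition Zbasis (n r : nat) (u : 'I_r -> 'rV[int]_n) (s : {set 'I_r}) : Prop :=
  (forall x : 'rV[int]_n, exists l : 'I_r -> int,
      (forall i, i \notin s -> l i = 0) /\ x = \sum_(i < r) l i *: u i) /\
  (forall l l' : 'I_r -> int, (forall i, i \notin s -> l i = 0) ->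
      (forall i, i \notin s -> l' i = 0) ->
      \sum_(i < r) l i *: u i = \sum_(i < r) l' i *: u i -> forall i, l i = l' i).

Record smooth_complete_fan (n r : nat) (u : 'I_r -> 'rV[int]_n) (S : {set {set 'I_r}}) : Prop := {
  fan_rays_inj : injective u;
  fan_rays_used : forall i, exists2 s, s \in S & i \in s;
  fan_smooth : forall s, s \in S -> Zbasis u s;
  fan_faces : forall s t x, s \in S -> t \in S -> in_cone u s x -> in_cone u t x ->
                in_cone u (s :&: t) x;
  fan_complete : forall x : 'rV[rat]_n, exists2 s, s \in S & in_cone u s x
}.

(* torus-invariant divisor sum_i a i D_i is ample iff its support function is
   strictly convex on the fan (Cox-Little-Schenck, Thm 6.1.14) *)
Definition ample (n r : nat) (u : 'I_r -> 'rV[int]_n) (S : {set {set 'I_r}}) (a : 'I_r -> int) : Prop :=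
  forall s, s \in S -> exists m : 'rV[int]_n,
    (forall i, i \in s -> dotz m (u i) = - a i) /\
    (forall j, j \notin s -> dotz m (u j) > - a j).

Definition projective_fan (n r : nat) (u : 'I_r -> 'rV[int]_n) (S : {set {set 'I_r}}) : Prop :=
  exists a, ample u S a.

(* H_2(X,Z) = Z-linear relations among ray generators; c i = int_beta D_i *)
Definition in_H2 (n r : nat) (u : 'I_r -> 'rV[int]_n) (c : 'I_r -> int) : Prop :=
  \sum_(i < r) c i *: u i = 0.

Definition degree (r : nat) (c a : 'I_r -> int) : int := \sum_(i < r) a i * c i.

(* the toric divisors D_i, i in I, have nonempty common intersection iff
   the rays in I span a cone of the fan (empty I: X itself, nonempty) *)
Definition divisors_meet (n r : nat) (u : 'I_r -> 'rV[int]_n) (S : {set {set 'I_r}}) (I : {set 'I_r}) : Prop :=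
  exists2 s, s \in S & I \subset s.

From mathcomp Require Import all_boot all_order all_algebra.
Import Order.TTheory GRing.Theory Num.Theory.
Set Implicit Arguments. Unset Strict Implicit.
Local Open Scope ring_scope.

(* Let sigma be a maximal cone containing every ray D_i with int_beta D_i < 0,
   and A = sum_i a_i D_i ample. Strict convexity of the support function of A
   gives m in M with a_i + <m, u_i> = 0 on sigma and > 0 off sigma. Replacing A
   by the linearly equivalent divisor with coefficients a_i + <m, u_i> does not
   change int_beta A, which becomes a sum of products of a positive coefficient
   and a nonnegative int_beta D_i over the rays off sigma. Some of these
   int_beta D_i is nonzero: otherwise beta would be a relation among the rays of
   sigma, which form a basis of N, forcing beta = 0. *)

Lemma dotz_sumr (n r : nat) (m : 'rV[int]_n) (u : 'I_r -> 'rV[int]_n) (c : 'I_r -> int) :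
  dotz m (\sum_(i < r) c i *: u i) = \sum_(i < r) dotz m (u i) * c i.
Proof.
rewrite /dotz; under [RHS]eq_bigr => i _ do rewrite mulr_suml.
rewrite [RHS]exchange_big /=; apply: eq_bigr => k _.
rewrite summxE mulr_sumr; apply: eq_bigr => i _.
by rewrite mxE mulrCA mulrC.
Qed.

Lemma dotzr0 (n : nat) (m : 'rV[int]_n) : dotz m 0 = 0.
Proof. by rewrite /dotz big1 // => k _; rewrite mxE mulr0. Qed.

Lemma degree_principal (n r : nat) (u : 'I_r -> 'rV[int]_n) (c : 'I_r -> int)
    (m : 'rV[int]_n) :
  in_H2 u c -> degree c (fun i => dotz m (u i)) = 0.
Proof. by move=> Hc; rewrite /degree -dotz_sumr Hc dotzr0. Qed.

Lemma degree_linear_equiv (n r : nat) (u : 'I_r -> 'rV[int]_n) (c a : 'I_r -> int)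
    (m : 'rV[int]_n) :
  in_H2 u c -> degree c (fun i => a i + dotz m (u i)) = degree c a.
Proof.
move=> Hc; rewrite /degree.
under eq_bigr => i _ do rewrite mulrDl.
rewrite big_split /=; have := degree_principal m Hc; rewrite /degree => ->.
exact: addr0.
Qed.

Lemma Zbasis_relation_eq0 (n r : nat) (u : 'I_r -> 'rV[int]_n) (s : {set 'I_r})
    (c : 'I_r -> int) :
  Zbasis u s -> in_H2 u c -> (forall i, i \notin s -> c i = 0) -> forall i, c i = 0.
Proof.
move=> [_ Zbasis_uniq] Hc c_supp i.
apply: (Zbasis_uniq c (fun _ => 0)) => //.
by rewrite Hc big1 // => j _; rewrite scale0r.
Qed.

Lemma degree_gt0 (r : nat) (s : {set 'I_r}) (c f : 'I_r -> int) :
  (forall i, i \in s -> f i = 0) -> (forall j, j \notin s -> 0 < f j) ->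
  (forall j, j \notin s -> 0 <= c j) -> (exists2 j, j \notin s & c j != 0) ->
  0 < degree c f.
Proof.
move=> f0 f_gt0 c_ge0 [j js cj].
have term_ge0 i : 0 <= f i * c i.
  case: (boolP (i \in s)) => is_; first by rewrite f0 ?mul0r.
  by rewrite mulr_ge0 ?c_ge0 ?ltW ?f_gt0.
rewrite /degree (bigD1 j) //= ltr_pwDl ?sumr_ge0 //.
by rewrite mulr_gt0 ?f_gt0 // lt_neqAle eq_sym cj c_ge0.
Qed.

Theorem proposition2p1 (n r : nat) (u : 'I_r -> 'rV[int]_n) (S : {set {set 'I_r}})
  (Hfan : smooth_complete_fan u S) (Hproj : projective_fan u S)
  (beta : 'I_r -> int) (Hbeta : in_H2 u beta) (Hnz : exists i, beta i != 0)
  (Hmeet : divisors_meet u S [set i | beta i < 0]) :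
  forall a : 'I_r -> int, ample u S a -> 0 < degree beta a.
Proof.
move=> a Ha; case: Hmeet => s sS neg_sub_s.
have [m [m_on_s m_off_s]] := Ha s sS.
rewrite -(degree_linear_equiv a m Hbeta).
have beta_ge0 j : j \notin s -> 0 <= beta j.
  move=> js; rewrite leNgt; apply: contra js => bj.
  by apply: (subsetP neg_sub_s); rewrite inE.
apply: (degree_gt0 (s := s)) => //.
- by move=> i is_; rewrite m_on_s // addrN.
- by move=> j js; rewrite addrC -[a j]opprK subr_gt0 m_off_s.
- case: (pickP (fun j => (j \notin s) && (beta j != 0))) => [j /andP[js bj] | none].
    by exists j.
  case: Hnz => i; rewrite (Zbasis_relation_eq0 (fan_smooth Hfan sS) Hbeta) ?eqxx //.
  by move=> j js; apply/eqP; move: (none j); rewrite js => /negbFE.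
Qed.
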